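(* Let $\mathcal{P}=((v_1,\dots,v_p),(v'_0,\dots,v'_{p+1}))$ be a dangerous caterpillar structure for an assignment $(x,y)$. Let $i$ be an index with $v_i\in\Gamma(\mathcal{P})$ and $L(v_i)=\min_{v\in\Gamma(\mathcal{P})}L(v)$, and let $j\in\{0,\dots,p+1\}$ be an index with $v'_j\ne\mathrm{nil}$ and $L(v'_j)>L(v_i)$. Then for every $a$ with $1\le a\le p$ and $\min(i,j)\le a\le\max(i,j)$ we have $L(v_a)\ge L(v_i)$.
   Context: $G=(V,E)$ undirected unweighted, $\mathrm{dist}_G$ shortest-path distance, $L:V\to\mathbb{N}$. An assignment is $x:V\times V\to\mathbb{R}_{\ge0}$, $y:V\to\mathbb{R}_{\ge0}$. A $\delta$-caterpillar structure for $(x,y)$ is a sequence of distinct vertices $P=(v_1,\dots,v_p)$ with a sequence $P'=(v'_0,\dots,v'_{p+1})$ such that: (i) $y_{v_i}=1$ for $i=1..p$; (ii) $\mathrm{dist}_G(v_i,v_{i+1})\le\delta$ for $i=1..p-1$; (iii) each $v'_i$ is $\mathrm{nil}$ or a vertex not in $\{v_1,\dots,v_p\}$; (iv) for $1\le i\le p$, if $v'_i\ne\mathrm{nil}$ then $L(v_i)\ge L(v'_i)$, $0<y_{v'_i}<1$, $\mathrm{dist}_G(v_i,v'_i)\le\delta$; (v) if $v'_0\ne\mathrm{nil}$ then $\mathrm{dist}_G(v'_0,v_1)\le\delta$ and $0<y_{v'_0}<1$; (vi) if $v'_{p+1}\ne\mathrm{nil}$ then $\mathrm{dist}_G(v'_{p+1},v_p)\le\delta$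 and $0<y_{v'_{p+1}}<1$; (vii) non-nil entries of $P'$ are pairwise distinct; (viii) $\sum_{v\in V(P')}y_v$ is an integer, where $V(P')$ is the set of non-nil entries. For such $\mathcal{P}$, $\Gamma(\mathcal{P})$ is the set of $v_i$ ($1\le i\le p$) for which there exist $0\le i_0<i<i_1\le p+1$ with $v'_{i_0}\ne\mathrm{nil}$, $L(v'_{i_0})>L(v_i)$, $v'_{i_1}\ne\mathrm{nil}$, $L(v'_{i_1})>L(v_i)$. $\mathcal{P}$ is safe if $\Gamma(\mathcal{P})=\emptyset$ and dangerous otherwise. *)

From HB Require Import structures.
From mathcomp Require Import all_boot all_order all_algebra.
Set Implicit Arguments. Unset Strict Implicit. Unset Printing Implicit Defensive.
Import Order.TTheory GRing.Theory Num.Theory.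
Local Open Scope ring_scope.

Definition simple_graph (V : finType) (e : rel V) : Prop :=
  symmetric e /\ irreflexive e.

Definition dist_le (V : finType) (e : rel V) (u w : V) (d : nat) : Prop :=
  exists s : seq V, [/\ path e u s, last u s = w & (size s <= d)%N].

Definition assignment (R : realFieldType) (V : finType)
  (x : V -> V -> R) (y : V -> R) : Prop :=
  (forall u w, 0 <= x u w) /\ (forall u, 0 <= y u).

(* A delta-caterpillar structure: P = (v 1, ..., v p), P' = (v' 0, ..., v' (p+1)),
   with None encoding nil. *)
Definition caterpillar (R : realFieldType) (V : finType) (e : rel V) (L : V -> nat)
  (y : V -> R) (delta : nat) (p : nat) (v : nat -> V) (v' : nat -> option V) : Prop :=
  (forall i j, (1 <= i <= p)%N -> (1 <= j <= p)%N -> v i = v j -> i = j) /\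
  (forall i, (1 <= i <= p)%N -> y (v i) = 1) /\
  (forall i, (1 <= i)%N -> (i < p)%N -> dist_le e (v i) (v i.+1) delta) /\
  (forall i w, (i <= p.+1)%N -> v' i = Some w ->
     forall k, (1 <= k <= p)%N -> w <> v k) /\
  (forall i w, (1 <= i <= p)%N -> v' i = Some w ->
     [/\ (L w <= L (v i))%N, 0 < y w, y w < 1 & dist_le e (v i) w delta]) /\
  (forall w, v' 0%N = Some w -> dist_le e w (v 1%N) delta /\ 0 < y w /\ y w < 1) /\
  (forall w, v' p.+1 = Some w -> dist_le e w (v p) delta /\ 0 < y w /\ y w < 1) /\
  (forall i j w, (i <= p.+1)%N -> (j <= p.+1)%N -> v' i = Some w -> v' j = Some w -> i = j) /\
  (exists z : int,
     \sum_(u in [set u : V | [exists k : 'I_p.+2, v' k == Some u]]) y u = z%:~R).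

Definition Gamma_index (V : finType) (L : V -> nat) (p : nat)
  (v : nat -> V) (v' : nat -> option V) (i : nat) : Prop :=
  (1 <= i <= p)%N /\
  exists i0 i1 w0 w1, (i0 < i)%N /\ (i < i1)%N /\ (i1 <= p.+1)%N /\
     v' i0 = Some w0 /\ (L (v i) < L w0)%N /\ v' i1 = Some w1 /\ (L (v i) < L w1)%N.

Definition Gamma (V : finType) (L : V -> nat) (p : nat)
  (v : nat -> V) (v' : nat -> option V) (u : V) : Prop :=
  exists i, Gamma_index L p v v' i /\ u = v i.

Definition dangerous (V : finType) (L : V -> nat) (p : nat)
  (v : nat -> V) (v' : nat -> option V) : Prop :=
  exists u, Gamma L p v v' u.

From HB Require Import structures.
From mathcomp Require Import all_boot all_order all_algebra.
From mathcomp Require Import zify.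

(* Let v_i be a vertex of Gamma(P) of minimum label and let
   v'_j be a leg with L(v'_j) > L(v_i).  Suppose some v_a strictly between
   positions i and j had L(v_a) < L(v_i).  Then a <> j, since a leg v'_a
   satisfies L(v'_a) <= L(v_a) by (iv).  Now v_a has a heavy leg on either
   side: v'_j on one side, and on the other side the witness leg of v_i
   lying beyond i (both are heavier than v_i, hence than v_a).  So v_a is in
   Gamma(P) with a smaller label than v_i, contradicting minimality. *)

Section CaterpillarFacts.

Variables (R : realFieldType) (V : finType) (e : rel V) (L : V -> nat).
Variables (y : V -> R) (delta p : nat) (v : nat -> V) (v' : nat -> option V).
Hypothesis Pcat : caterpillar e L y delta p v v'.

Lemma caterpillar_spine_inj k l :
  (1 <= k <= p)%N -> (1 <= l <= p)%N -> v k = v l -> k = l.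
Proof. by case: Pcat => inj _; apply: inj. Qed.

Lemma caterpillar_leg_label a u :
  (1 <= a <= p)%N -> v' a = Some u -> (L u <= L (v a))%N.
Proof.
case: Pcat => _ [_ [_ [_ [leg _]]]] ap Eu.
by have [] := leg a u ap Eu.
Qed.

Lemma Gamma_spine_index k :
  (1 <= k <= p)%N -> Gamma L p v v' (v k) -> Gamma_index L p v v' k.
Proof.
move=> kp [l [Gl Evl]].
have El : l = k by apply: caterpillar_spine_inj (proj1 Gl) kp (esym Evl).
by rewrite -El.
Qed.

End CaterpillarFacts.

Arguments caterpillar_leg_label {R V e L y delta p v v'} Pcat {a u}.
Arguments Gamma_spine_index {R V e L y delta p v v'} Pcat {k}.

(* Transfer of Gamma-membership: if v_i is in Gamma(P) via index i and v'_j
   is a leg heavier than v_i, then every spine vertex v_a strictly between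
   positions i and j whose label does not exceed L(v_i) is in Gamma(P) too:
   v'_j is a heavy leg on one side of a, and the witness of v_i on the far
   side of i is a heavy leg on the other side. *)
Lemma Gamma_index_between {V : finType} {L : V -> nat} {p : nat}
  {v : nat -> V} {v' : nat -> option V} {i j a : nat} {w : V} :
  Gamma_index L p v v' i ->
  (j <= p.+1)%N -> v' j = Some w -> (L (v i) < L w)%N ->
  (1 <= a <= p)%N -> a <> i -> a <> j -> (minn i j <= a <= maxn i j)%N ->
  (L (v a) <= L (v i))%N ->
  Gamma_index L p v v' a.
Proof.
move=> [_ [i0 [i1 [w0 [w1 [i0i [ii1 [i1p [Ew0 [Lw0 [Ew1 Lw1]]]]]]]]]]].
move=> jp Ew Lw ap ai aj aij Lai; split=> //.
have [ji | ij] := ltnP j i.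
- by exists j, i1, w, w1; do 6 (split; first by lia || done); lia.
- by exists i0, j, w0, w; do 6 (split; first by lia || done); lia.
Qed.

Theorem mainTheorem13 (R : realFieldType) (V : finType) (e : rel V)
  (L : V -> nat) (x : V -> V -> R) (y : V -> R) (delta p : nat)
  (v : nat -> V) (v' : nat -> option V) (i j : nat) (w : V) :
  simple_graph e ->
  assignment x y ->
  caterpillar e L y delta p v v' ->
  dangerous L p v v' ->
  (1 <= i <= p)%N ->
  Gamma L p v v' (v i) ->
  (forall u, Gamma L p v v' u -> (L (v i) <= L u)%N) ->
  (j <= p.+1)%N ->
  v' j = Some w ->
  (L (v i) < L w)%N ->
  forall a, (1 <= a <= p)%N -> (minn i j <= a <= maxn i j)%N ->
  (L (v i) <= L (v a))%N.
Proof.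
move=> _ _ Pcat _ ip Gi Gmin jp Ew Lw a ap aij.
rewrite leqNgt; apply/negP => Lai.
have ai : a <> i by move=> Eai; rewrite Eai ltnn in Lai.
have aj : a <> j.
  move=> Eaj; rewrite -Eaj in Ew.
  by have := caterpillar_leg_label Pcat ap Ew; lia.
have Ga : Gamma L p v v' (v a).
  have Gi_idx := Gamma_spine_index Pcat ip Gi.
  have Ga_idx := Gamma_index_between Gi_idx jp Ew Lw ap ai aj aij (ltnW Lai).
  by exists a.
by have := Gmin _ Ga; lia.
Qed.
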